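(* Let UBEV-S (described in the context) be run for $K$ episodes on a finite-horizon episodic stationary MDP with $S$ states, $A$ actions and horizon $H$. Then $$\sum_{k=1}^K\sum_{t=1}^H\sum_{(s,a)\notin L_k}w_{tk}(s,a)=\tilde O(SAH).$$
   Context: Setting: finite-horizon episodic MDP with finite state set ($S$ states), finite action set ($A$ actions), horizon $H$, stationary transitions and mean rewards in $[0,1]$. UBEV-S is an algorithm (with failure tolerance $\delta\in(0,1]$) that in each episode $k$ plays a policy $\pi_k$ mapping (state, timestep) to actions. $w_{tk}(s,a)$ denotes the probability, in episode $k$ under $\pi_k$, of being in state $s$ at step $t$ and taking action $a$; $w_k(s,a)=\sum_{t\in[H]}w_{tk}(s,a)$. The set $L_k$ is $L_k=\{(s,a)\in\mathcal S\times\mathcal A:\ \frac14\sum_{j\le k}w_j(s,a)\ge H\ln\frac{9SA}{\delta}\}$. $\tilde O(\cdot)$ hides constants and factors polylogarithmic in quantities polynomial in $S,A,T,K,H,1/\delta$. *)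

From HB Require Import structures.
From mathcomp Require Import all_boot all_order all_algebra.
From mathcomp Require Import reals exp.
Set Implicit Arguments. Unset Strict Implicit. Unset Printing Implicit Defensive.
Import Order.TTheory GRing.Theory Num.Theory.
Local Open Scope ring_scope.

Section MDP.
Variables (R : realType) (St Ac : finType).

Definition is_mdp (P : St -> Ac -> St -> R) (p0 : St -> R) (r : St -> Ac -> R) :=
  [/\ (forall s a s', 0 <= P s a s'),
      (forall s a, \sum_(s' : St) P s a s' = 1),
      (forall s, 0 <= p0 s),
      \sum_(s : St) p0 s = 1
    & (forall s a, 0 <= r s a <= 1)].

(* A (deterministic, non-stationary) policy: [pi t s] is the action taken in
   state [s] at step [t] (steps are 0-indexed: t = 0, ..., H-1). *)
Fixpoint state_dist (P : St -> Ac -> St -> R) (p0 : St -> R)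
    (pi : nat -> St -> Ac) (t : nat) : St -> R :=
  match t with
  | 0 => p0
  | t'.+1 => fun s' => \sum_(s : St) state_dist P p0 pi t' s * P s (pi t' s) s'
  end.

Definition occ P p0 (pi : nat -> St -> Ac) (t : nat) (sa : St * Ac) : R :=
  state_dist P p0 pi t sa.1 * (pi t sa.1 == sa.2)%:R.

Definition occ_tot P p0 (H : nat) (pi : nat -> St -> Ac) (sa : St * Ac) : R :=
  \sum_(t < H) occ P p0 pi t sa.

(* (s,a) \in L_k  (episodes 0-indexed, j <= k inclusive). *)
Definition inL P p0 (H : nat) (delta : R) (pis : nat -> nat -> St -> Ac)
    (k : nat) (sa : St * Ac) : bool :=
  (H%:R * ln (9 * #|St|%:R * #|Ac|%:R / delta)
     <= 4^-1 * \sum_(j < k.+1) occ_tot P p0 H (pis j) sa).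

End MDP.

From HB Require Import structures.
From mathcomp Require Import all_boot all_order all_algebra.
From mathcomp Require Import reals exp.
From mathcomp Require Import ring lra.

Import Order.TTheory GRing.Theory Num.Theory.
Local Open Scope ring_scope.

(* A pair (s,a) is outside L_k only while its cumulative occupation mass,
   episode k included, is below 4 H ln(9SA/delta); hence the mass it collects
   in those episodes is at most that threshold. Summing over the SA pairs and
   bounding ln(9SA/delta) by 9 (1 + ln(SAHK/delta)) gives the claim. *)

Lemma sum_while_prefix_lt {R : realDomainType} (w : nat -> R) (B : R) (K : nat) :
  (forall j, 0 <= w j) -> 0 <= B ->
  \sum_(k < K) (if \sum_(j < k.+1) w j < B then w k else 0) <= B.
Proof.
move=> w_ge0 B_ge0.
suff [] : \sum_(k < K) (if \sum_(j < k.+1) w j < B then w k else 0)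
            <= \sum_(k < K) w k /\
          \sum_(k < K) (if \sum_(j < k.+1) w j < B then w k else 0) <= B by [].
elim: K => [|K [le_prefix le_B]]; first by rewrite !big_ord0.
rewrite !big_ord_recr /=; case: ifP => [prefix_lt|_].
- by split; lra.
- by have := w_ge0 K; split; lra.
Qed.

Lemma ln_mul_le_add {R : realType} (c x y : R) :
  0 < c -> 0 < x <= y -> ln (c * x) <= c + ln y.
Proof.
move=> c_gt0 /andP[x_gt0 le_xy].
have x_le_y : ln x <= ln y by rewrite ler_ln ?posrE //; apply: lt_le_trans le_xy.
rewrite lnM ?posrE //; have := ln_sublinear c_gt0; lra.
Qed.

Lemma ln_confidence_le {R : realType} {S A H K delta : R} :
  1 <= S -> 1 <= A -> 1 <= H -> 1 <= K -> 0 < delta <= 1 ->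
  0 <= ln (9 * S * A / delta) <= 9 * (1 + ln (S * A * H * K / delta)).
Proof.
move=> S_ge1 A_ge1 H_ge1 K_ge1 /andP[delta_gt0 delta_le1].
have SA_ge1 : 1 <= S * A / delta by rewrite ler_pdivlMr // mul1r; nra.
have SA_le : S * A / delta <= S * A * H * K / delta.
  by rewrite ler_pM2r ?invr_gt0 // -(mulrA (S * A)) ler_peMr; nra.
have L_ge0 : 0 <= ln (S * A * H * K / delta) by apply: ln_ge0; lra.
have ln9_le : ln (9 * (S * A / delta)) <= 9 + ln (S * A * H * K / delta).
  by apply: ln_mul_le_add => //; apply/andP; split; lra.
rewrite -[9 * S * A]mulrA -mulrA; apply/andP; split; last lra.
by apply: ln_ge0; nra.
Qed.

Section Occupancy.
Context {R : realType} {St Ac : finType}.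
Context {P : St -> Ac -> St -> R} {p0 : St -> R}.
Hypotheses (P_ge0 : forall s a s', 0 <= P s a s') (p0_ge0 : forall s, 0 <= p0 s).

Lemma state_dist_ge0 pi t s : 0 <= state_dist P p0 pi t s.
Proof.
elim: t s => [|t IH] s /=; first exact: p0_ge0.
by apply: sumr_ge0 => s' _; apply: mulr_ge0.
Qed.

Lemma occ_ge0 pi t sa : 0 <= occ P p0 pi t sa.
Proof. exact: mulr_ge0 (state_dist_ge0 _ _ _) (ler0n _ _). Qed.

Lemma occ_tot_ge0 H pi sa : 0 <= occ_tot P p0 H pi sa.
Proof. by apply: sumr_ge0 => t _; apply: occ_ge0. Qed.

Context {H : nat} {delta : R} {pis : nat -> nat -> St -> Ac}.

Lemma sum_occ_notinL K :
  \sum_(k < K) \sum_(t < H) \sum_(sa : St * Ac | ~~ inL P p0 H delta pis k sa)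
      occ P p0 (pis k) t sa
  = \sum_(sa : St * Ac) \sum_(k < K)
      (if ~~ inL P p0 H delta pis k sa then occ_tot P p0 H (pis k) sa else 0).
Proof.
rewrite [RHS]exchange_big; apply: eq_bigr => k _.
rewrite exchange_big big_mkcond; apply: eq_bigr => sa _.
by case: ifP.
Qed.

Lemma sum_occ_tot_notinL_le K sa :
  0 <= H%:R * ln (9 * #|St|%:R * #|Ac|%:R / delta) ->
  \sum_(k < K)
      (if ~~ inL P p0 H delta pis k sa then occ_tot P p0 H (pis k) sa else 0)
  <= 4 * (H%:R * ln (9 * #|St|%:R * #|Ac|%:R / delta)).
Proof.
set T := H%:R * _ => T_ge0.
have notinL_lt k : ~~ inL P p0 H delta pis k sa
                   = (\sum_(j < k.+1) occ_tot P p0 H (pis j) sa < 4 * T).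
  by rewrite /inL -ltNge mulrC ltr_pdivrMr // mulrC.
under eq_bigr do rewrite notinL_lt.
apply: (sum_while_prefix_lt (fun j => occ_tot P p0 H (pis j) sa)).
- by move=> j; apply: occ_tot_ge0.
- by apply: mulr_ge0.
Qed.

End Occupancy.

Theorem lemma3 (R : realType) :
  exists (C : R) (c : nat),
  forall (St Ac : finType) (H K : nat) (delta : R)
         (P : St -> Ac -> St -> R) (p0 : St -> R) (r : St -> Ac -> R)
         (pis : nat -> nat -> St -> Ac),
    (0 < #|St|)%N -> (0 < #|Ac|)%N -> (0 < H)%N -> (0 < K)%N ->
    0 < delta <= 1 ->
    is_mdp P p0 r ->
    \sum_(k < K) \sum_(t < H) \sum_(sa : St * Ac | ~~ inL P p0 H delta pis k sa)
        occ P p0 (pis k) t sa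
    <= C * (#|St|%:R * #|Ac|%:R * H%:R)
         * (1 + ln (#|St|%:R * #|Ac|%:R * H%:R * K%:R / delta)) ^+ c.
Proof.
exists 36, 1%N => St Ac H K delta P p0 r pis.
rewrite -!(ler1n R) => S_ge1 A_ge1 H_ge1 K_ge1 delta_bd [P_ge0 _ p0_ge0 _ _].
have /andP[l_ge0 l_le] := ln_confidence_le S_ge1 A_ge1 H_ge1 K_ge1 delta_bd.
have T_ge0 := mulr_ge0 (ler0n R H) l_ge0.
rewrite sum_occ_notinL.
apply: le_trans (ler_sum _ (fun sa _ => sum_occ_tot_notinL_le P_ge0 p0_ge0 K sa T_ge0)) _.
rewrite sumr_const card_prod -[_ *+ (_ * _)]mulr_natr natrM expr1.
have SAH_ge0 : 0 <= #|St|%:R * #|Ac|%:R * H%:R :> R.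
  by apply: mulr_ge0; [apply: mulr_ge0|]; lra.
have := ler_wpM2l SAH_ge0 l_le; lra.
Qed.
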